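(* Fix $t>1$ and let $(g_{n,t})_{n\ge0}$ be defined by $g_{0,t}=1$, $g_{n,t}=n\,g_{n-1,t}^{\,t}$ $(n\ge1)$. Let $\sigma_t=\prod_{n=1}^\infty n^{1/t^n}$. For $x\in[0,\infty)$ define $f_t(x)=\prod_{m=1}^{\infty}(1+mx)^{1/t^m}\in[1,\infty)$. Then for each $N\ge2$ and $n\ge1$ there exists a positive number $\mu=\mu(N,n,t)$ such that $$g_{n,t}=\sigma_t^{\,t^n}n^{-1/(t-1)}\left[1+\sum_{k=1}^{N-1}\frac{1}{n^k k!}\frac{\partial^k f_t}{\partial x^k}(0)+\frac{1}{n^N N!}\frac{\partial^N f_t}{\partial x^N}(\mu)\right]^{-1}.$$ Moreover, for fixed $N\ge2$ and fixed $t>1$, $$\lim_{n\to\infty}\mu(N,n,t)=0,\qquad \lim_{n\to\infty}\frac{\partial^N f_t}{\partial x^N}(\mu(N,n,t))=\frac{\partial^N f_t}{\partial x^N}(0).$$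
   Context: Derivatives of $f_t$ at $x=0$ are right-sided derivatives. *)

From Stdlib Require Import Reals Lra.
From Coquelicot Require Import Coquelicot.
Open Scope R_scope.

Fixpoint g_seq (t : R) (n : nat) : R :=
  match n with
  | O => 1
  | S k => INR (S k) * Rpower (g_seq t k) t
  end.

Fixpoint prod1 (a : nat -> R) (M : nat) : R :=
  match M with
  | O => 1
  | S k => prod1 a k * a (S k)
  end.

Definition inf_prod (a : nat -> R) : R := real (Lim_seq (fun M => prod1 a M)).

Definition sigma_t (t : R) : R :=
  inf_prod (fun n => Rpower (INR n) (/ t ^ n)).

Definition f_t (t : R) (x : R) : R :=
  inf_prod (fun m => Rpower (1 + INR m * x) (/ t ^ m)).

(* derivative of a function on [0,oo): ordinary derivative at x > 0,
   right-sided derivative at x = 0 (values at x < 0 are irrelevant) *)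
Definition rderive (g : R -> R) (x : R) : R :=
  if Rlt_dec 0 x then Derive g x
  else lim (filtermap (fun h => (g h - g 0) / h) (at_right 0)).

Fixpoint rderive_n (k : nat) (g : R -> R) : R -> R :=
  match k with
  | O => g
  | S j => rderive (rderive_n j g)
  end.

From Stdlib Require Import Reals Factorial Lra Lia IndefiniteDescription.
From Coquelicot Require Import Coquelicot.
Open Scope R_scope.

(* Taking logarithms, ln g_n = t^n sum_{m <= n} ln m / t^m and ln sigma_t = sum_m ln m / t^m, so
   t^n ln sigma_t - ln g_n = sum_{k >= 1} ln (n + k) / t^k = ln n / (t - 1) + ln f_t (1/n), i.e.
   g_n = sigma_t^(t^n) n^(-1/(t-1)) / f_t (1/n).  The bracket is the Taylor expansion of f_t
   between 0 and 1/n with Lagrange remainder, so 0 < mu < 1/n.  Since the termwise derivatives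
   of ln f_t = sum_m ln (1 + m x) / t^m are dominated by m^k / t^m, f_t is smooth on (0, oo)
   and all its derivatives extend continuously to 0; this is exactly what a one-sided Taylor
   theorem needs, and it also gives the limit of the N-th derivative at mu. *)

(** * A one-sided Taylor theorem *)

Lemma lim_filtermap_of_filterlim {T} (F : (T -> Prop) -> Prop) {FF : ProperFilter F}
    (q : T -> R) (l : R) :
  filterlim q F (locally l) -> lim (filtermap q F) = l.
Proof.
  intros Hq.
  assert (PF : ProperFilter (filtermap q F)) by now apply filtermap_proper_filter.
  assert (Hc : cauchy (filtermap q F)).
  { intros eps. exists l. apply Hq, locally_ball. }
  apply (filterlim_locally_unique (F := F) q); auto.
  intros P [eps HP]. generalize (complete_cauchy _ PF Hc eps).
  apply filter_imp. intros x Hx. now apply HP.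
Qed.

Lemma filterlim_Rplus {T} (F : (T -> Prop) -> Prop) {FF : Filter F} (f g : T -> R) (a b : R) :
  filterlim f F (locally a) -> filterlim g F (locally b) ->
  filterlim (fun x => f x + g x) F (locally (a + b)).
Proof. intros Hf Hg. exact (filterlim_comp_2 f g Rplus Hf Hg (filterlim_plus a b)). Qed.

Lemma filterlim_Rmult {T} (F : (T -> Prop) -> Prop) {FF : Filter F} (f g : T -> R) (a b : R) :
  filterlim f F (locally a) -> filterlim g F (locally b) ->
  filterlim (fun x => f x * g x) F (locally (a * b)).
Proof. intros Hf Hg. exact (filterlim_comp_2 f g Rmult Hf Hg (filterlim_mult a b)). Qed.

Lemma filterlim_sum_f_R0 {T} (F : (T -> Prop) -> Prop) {FF : Filter F}
    (G : nat -> T -> R) (a : nat -> R) (M : nat) :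
  (forall k, (k <= M)%nat -> filterlim (G k) F (locally (a k))) ->
  filterlim (fun z => sum_f_R0 (fun k => G k z) M) F (locally (sum_f_R0 a M)).
Proof.
  induction M as [|M IH]; intros HG; simpl.
  - now apply HG.
  - apply (filterlim_Rplus _ (fun z => sum_f_R0 (fun k => G k z) M) (G (S M))); auto.
Qed.

Lemma continuous_at_right (f : R -> R) (a : R) :
  continuous f a -> filterlim f (at_right a) (locally (f a)).
Proof. intros H P HP. destruct (H P HP) as [e He]. exists e. intros y Hy _. now apply He. Qed.

Lemma locally_gt (a x : R) : a < x -> locally x (fun y => a < y).
Proof.
  intros Hx. exists (mkposreal (x - a) ltac:(lra)). intros y Hy.
  assert (H : Rabs (y - x) < x - a) by apply Hy. apply Rabs_lt_between in H. lra.
Qed.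

Lemma Rolle_right (phi dphi : R -> R) (a b : R) :
  a < b -> filterlim phi (at_right a) (locally (phi a)) ->
  (forall x, a < x <= b -> continuous phi x) ->
  (forall x, a < x < b -> is_derive phi x (dphi x)) ->
  phi a = phi b -> exists c, a < c < b /\ dphi c = 0.
Proof.
  intros Hab Hr Hc Hd Heq.
  (* [phi] frozen to the left of [a] is continuous on [a, b] and agrees with [phi] on (a, oo) *)
  set (psi := fun y => phi (Rmax a y)).
  assert (Eloc : forall x, a < x -> locally x (fun y => phi y = psi y)).
  { intros x Hx. apply (filter_imp (fun y => a < y)); [|now apply locally_gt].
    intros y Hy. unfold psi. now rewrite Rmax_right by lra. }
  assert (Dpsi : forall x, a < x < b -> is_derive psi x (dphi x)).
  { intros x Hx. apply is_derive_ext_loc with phi; [apply Eloc|apply Hd]; lra. }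
  assert (pr : forall x, a < x < b -> derivable_pt psi x).
  { intros x Hx. apply ex_derive_Reals_0. eexists. now apply Dpsi. }
  assert (Cpsi : forall x, a <= x <= b -> continuity_pt psi x).
  { intros x Hx. apply continuity_pt_filterlim. destruct (Req_dec x a) as [->|Hxa].
    - intros P [eps HP]. destruct (Hr (ball (phi a) eps) (locally_ball _ _)) as [d Hd'].
      exists d. intros y Hy. apply HP. unfold psi. rewrite (Rmax_left a a) by lra.
      destruct (Rlt_dec a y) as [Hay|Hay].
      + rewrite Rmax_right by lra. now apply Hd'.
      + rewrite Rmax_left by lra. apply ball_center.
    - apply continuous_ext_loc with phi; [apply Eloc|apply Hc]; lra. }
  destruct (Rolle psi a b pr Cpsi Hab) as [c [P Hc0]].
  { unfold psi. rewrite Rmax_left, Rmax_right; lra. }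
  exists c. split; auto. rewrite Derive_Reals in Hc0.
  now rewrite (is_derive_unique _ _ _ (Dpsi c P)) in Hc0.
Qed.

Lemma is_derive_Rplus (f g : R -> R) (x df dg : R) :
  is_derive f x df -> is_derive g x dg -> is_derive (fun y => f y + g y) x (df + dg).
Proof. intros Hf Hg. exact (is_derive_plus f g x df dg Hf Hg). Qed.

Lemma is_derive_Rmult (f g : R -> R) (x df dg : R) :
  is_derive f x df -> is_derive g x dg ->
  is_derive (fun y => f y * g y) x (df * g x + f x * dg).
Proof. intros Hf Hg. apply (is_derive_mult f g x df dg Hf Hg), Rmult_comm. Qed.

Lemma is_derive_taylor_sum (D : nat -> R -> R) (b y : R) (M : nat) :
  (forall k, (k <= M)%nat -> is_derive (D k) y (D (S k) y)) ->
  is_derive (fun z => sum_f_R0 (fun k => D k z * (b - z) ^ k / INR (fact k)) M) y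
    (D (S M) y * (b - y) ^ M / INR (fact M)).
Proof.
  induction M as [|M IH]; intros HD.
  - apply (is_derive_ext (D 0%nat)). { intros z. simpl. field. }
    replace (D 1%nat y * (b - y) ^ 0 / INR (fact 0)) with (D 1%nat y) by (simpl; field).
    now apply HD.
  - assert (Hfact : INR (fact (S M)) = INR (S M) * INR (fact M))
      by now rewrite fact_simpl, mult_INR.
    assert (Hf0 : INR (fact M) <> 0) by apply INR_fact_neq_0.
    assert (HS0 : INR (S M) <> 0) by (apply not_0_INR; lia).
    assert (Hpoly : is_derive (fun z => (b - z) ^ S M / INR (fact (S M))) y
                      (- ((b - y) ^ M / INR (fact M)))).
    { apply (is_derive_ext (fun z => / INR (fact (S M)) * (b - z) ^ S M)).
      { intros z. apply Rmult_comm. }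
      replace (- ((b - y) ^ M / INR (fact M)))
        with (/ INR (fact (S M)) * (INR (S M) * -1 * (b - y) ^ pred (S M)))
        by (simpl pred; rewrite Hfact; field; auto).
      apply is_derive_scal, is_derive_pow. auto_derive; auto. }
    assert (Hsum := is_derive_Rplus _ _ _ _ _ (IH (fun k Hk => HD k (le_S _ _ Hk)))
                      (is_derive_Rmult _ _ _ _ _ (HD (S M) (le_n _)) Hpoly)).
    replace (D (S (S M)) y * (b - y) ^ S M / INR (fact (S M)))
      with (D (S M) y * (b - y) ^ M / INR (fact M) +
            (D (S (S M)) y * ((b - y) ^ S M / INR (fact (S M)))
             + D (S M) y * - ((b - y) ^ M / INR (fact M)))) by (unfold Rdiv; ring).
    revert Hsum. apply is_derive_ext. intros z. simpl. unfold Rdiv. ring.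
Qed.

Lemma taylor_sum_at_center (D : nat -> R -> R) (b : R) (M : nat) :
  sum_f_R0 (fun k => D k b * (b - b) ^ k / INR (fact k)) M = D 0%nat b.
Proof.
  induction M as [|M IH]; simpl.
  - field.
  - rewrite IH, Rminus_diag. unfold Rdiv. ring.
Qed.

Lemma filterlim_taylor_sum_right (D : nat -> R -> R) (M : nat) (a b : R) :
  (forall k, (k <= M)%nat -> filterlim (D k) (at_right a) (locally (D k a))) ->
  filterlim (fun y => sum_f_R0 (fun k => D k y * (b - y) ^ k / INR (fact k)) M) (at_right a)
    (locally (sum_f_R0 (fun k => D k a * (b - a) ^ k / INR (fact k)) M)).
Proof.
  intros HC. apply (filterlim_sum_f_R0 _ (fun k y => D k y * (b - y) ^ k / INR (fact k))).
  intros k Hk. unfold Rdiv.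
  apply (filterlim_ext (fun y => D k y * ((b - y) ^ k * / INR (fact k)))); [intros y; ring|].
  rewrite Rmult_assoc. apply (filterlim_Rmult _ (D k) (fun y => (b - y) ^ k * _)); auto.
  apply (continuous_at_right (fun y => (b - y) ^ k * / INR (fact k))).
  apply (ex_derive_continuous (K := R_AbsRing) (fun y => (b - y) ^ k * / INR (fact k))).
  auto_derive. auto.
Qed.

Lemma Taylor_Lagrange_right (D : nat -> R -> R) (M : nat) (a b : R) : a < b ->
  (forall k x, (k <= M)%nat -> a < x <= b -> is_derive (D k) x (D (S k) x)) ->
  (forall k, (k <= M)%nat -> filterlim (D k) (at_right a) (locally (D k a))) ->
  exists xi, a < xi < b /\
    D 0%nat b = sum_f_R0 (fun k => D k a * (b - a) ^ k / INR (fact k)) M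
                + D (S M) xi * (b - a) ^ S M / INR (fact (S M)).
Proof.
  intros Hab HD HC.
  set (psi := fun y => sum_f_R0 (fun k => D k y * (b - y) ^ k / INR (fact k)) M).
  assert (Hpow : 0 < (b - a) ^ S M) by (apply pow_lt; lra).
  set (K := (D 0%nat b - psi a) / (b - a) ^ S M).
  set (phi := fun y => psi y + K * (b - y) ^ S M).
  set (dphi := fun y => D (S M) y * (b - y) ^ M / INR (fact M)
                        + K * (INR (S M) * -1 * (b - y) ^ M)).
  assert (Hphi : forall y, a < y <= b -> is_derive phi y (dphi y)).
  { intros y Hy. apply is_derive_Rplus.
    - apply is_derive_taylor_sum. intros k Hk. now apply HD.
    - apply is_derive_scal, (is_derive_pow (fun z => b - z) (S M) y (-1)).
      auto_derive; auto. }
  destruct (Rolle_right phi dphi a b Hab) as [c [Hc Hc0]].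
  - apply (filterlim_Rplus _ psi (fun y => K * (b - y) ^ S M)).
    + now apply filterlim_taylor_sum_right.
    + apply (continuous_at_right (fun y => K * (b - y) ^ S M)).
      apply (ex_derive_continuous (K := R_AbsRing) (fun y => K * (b - y) ^ S M)).
      auto_derive. auto.
  - intros x Hx. apply (ex_derive_continuous (K := R_AbsRing) phi).
    eexists. now apply Hphi.
  - intros x Hx. apply Hphi. lra.
  - unfold phi. unfold psi at 2.
    rewrite taylor_sum_at_center, Rminus_diag, pow_i by lia.
    unfold K. field. lra.
  - exists c. split; auto.
    assert (Hnz : (b - c) ^ M <> 0) by (apply pow_nonzero; lra).
    assert (Hn : INR (S M) <> 0) by (apply not_0_INR; lia).
    assert (Hf : INR (fact M) <> 0) by apply INR_fact_neq_0.
    assert (E : K * INR (S M) * (b - c) ^ M = D (S M) c * (b - c) ^ M / INR (fact M))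
      by (unfold dphi in Hc0; lra).
    assert (HK : K = D (S M) c / INR (fact (S M))).
    { rewrite fact_simpl, mult_INR. apply (Rmult_eq_reg_r (INR (S M) * (b - c) ^ M)).
      - rewrite <- Rmult_assoc, E. field. auto.
      - now apply Rmult_integral_contrapositive. }
    replace (D 0%nat b) with (psi a + K * (b - a) ^ S M) by (unfold K; field; lra).
    rewrite HK. unfold psi, Rdiv. ring.
Qed.

Lemma filterlim_difference_quotient_right (g dg : R -> R) (l : R) :
  filterlim g (at_right 0) (locally (g 0)) ->
  (forall x, 0 < x -> is_derive g x (dg x)) ->
  filterlim dg (at_right 0) (locally l) ->
  filterlim (fun h => (g h - g 0) / h) (at_right 0) (locally l).
Proof.
  intros Hg Hd Hl P [eps HP].
  destruct (Hl (ball l eps) (locally_ball _ _)) as [d Hd'].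
  exists d. intros h Hh hpos. apply HP.
  set (D := fun k : nat => match k with O => g | _ => dg end).
  destruct (Taylor_Lagrange_right D 0 0 h hpos) as [xi [Hxi HT]].
  - intros k x Hk Hx. replace k with 0%nat by lia. apply Hd. lra.
  - intros k Hk. now replace k with 0%nat by lia.
  - simpl in HT. replace ((g h - g 0) / h) with (dg xi) by (rewrite HT; field; lra).
    apply Hd'; [|lra]. assert (H : Rabs (h - 0) < d) by apply Hh.
    change (Rabs (xi - 0) < d). apply Rabs_lt_between in H. apply Rabs_lt_between. lra.
Qed.

Lemma rderive_pos (g dg : R -> R) (x : R) :
  0 < x -> is_derive g x (dg x) -> rderive g x = dg x.
Proof.
  intros Hx Hd. unfold rderive. destruct (Rlt_dec 0 x) as [_|]; [|lra].
  now apply is_derive_unique.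
Qed.

Lemma rderive_0 (g dg : R -> R) (l : R) :
  filterlim g (at_right 0) (locally (g 0)) ->
  (forall x, 0 < x -> is_derive g x (dg x)) ->
  filterlim dg (at_right 0) (locally l) ->
  rderive g 0 = l.
Proof.
  intros Hg Hd Hl. unfold rderive. destruct (Rlt_dec 0 0); [lra|].
  apply lim_filtermap_of_filterlim; [apply at_right_proper_filter|].
  now apply (filterlim_difference_quotient_right g dg).
Qed.

(** * Functions smooth on (0, oo) up to 0 *)

Fixpoint smooth_right (n : nat) (phi : R -> R) : Prop :=
  (exists l, filterlim phi (at_right 0) (locally l)) /\
  match n with
  | O => True
  | S n' => exists dphi, (forall x, 0 < x -> is_derive phi x (dphi x)) /\ smooth_right n' dphi
  end.

Lemma smooth_right_lim (n : nat) (phi : R -> R) :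
  smooth_right n phi -> exists l, filterlim phi (at_right 0) (locally l).
Proof. now destruct n as [|n]; intros [H _]. Qed.

Lemma smooth_right_S (n : nat) (phi : R -> R) : smooth_right (S n) phi -> smooth_right n phi.
Proof.
  revert phi. induction n as [|n IH]; intros phi [Hl [dphi [Hd Hn]]].
  - now split.
  - split; auto. exists dphi. auto.
Qed.

Lemma smooth_right_scal (n : nat) (c : R) (phi : R -> R) :
  smooth_right n phi -> smooth_right n (fun x => c * phi x).
Proof.
  revert phi. induction n as [|n IH]; intros phi [[l Hl] Hn]; split.
  1,3: exists (c * l); apply (filterlim_Rmult _ (fun _ => c) phi); [apply filterlim_const|exact Hl].
  - exact I.
  - destruct Hn as [dphi [Hd Hn]]. exists (fun x => c * dphi x).
    split; auto. intros x Hx. now apply is_derive_scal, Hd.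
Qed.

Lemma smooth_right_plus (n : nat) (phi chi : R -> R) :
  smooth_right n phi -> smooth_right n chi -> smooth_right n (fun x => phi x + chi x).
Proof.
  revert phi chi. induction n as [|n IH]; intros phi chi [[l1 L1] H1] [[l2 L2] H2]; split.
  1,3: exists (l1 + l2); now apply (filterlim_Rplus _ phi chi).
  - exact I.
  - destruct H1 as [d1 [D1 N1]], H2 as [d2 [D2 N2]]. exists (fun x => d1 x + d2 x).
    split; auto. intros x Hx. apply is_derive_Rplus; auto.
Qed.

Lemma smooth_right_mult (n : nat) (phi chi : R -> R) :
  smooth_right n phi -> smooth_right n chi -> smooth_right n (fun x => phi x * chi x).
Proof.
  revert phi chi. induction n as [|n IH]; intros phi chi H1 H2.
  all: destruct (smooth_right_lim _ _ H1) as [l1 L1], (smooth_right_lim _ _ H2) as [l2 L2].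
  all: split; [exists (l1 * l2); now apply (filterlim_Rmult _ phi chi)|].
  - exact I.
  - assert (H1' := smooth_right_S _ _ H1). assert (H2' := smooth_right_S _ _ H2).
    destruct H1 as [_ [d1 [D1 N1]]], H2 as [_ [d2 [D2 N2]]].
    exists (fun x => d1 x * chi x + phi x * d2 x). split.
    + intros x Hx. apply is_derive_Rmult; auto.
    + apply (smooth_right_plus n (fun x => d1 x * chi x) (fun x => phi x * d2 x)); auto.
Qed.

Lemma smooth_right_exp (n : nat) (phi : R -> R) :
  smooth_right n phi -> smooth_right n (fun x => exp (phi x)).
Proof.
  revert phi. induction n as [|n IH]; intros phi H1.
  all: destruct (smooth_right_lim _ _ H1) as [l L].
  all: split; [exists (exp l); exact (filterlim_comp _ _ _ phi exp _ _ _ L (continuous_exp l))|].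
  - exact I.
  - assert (H1' := smooth_right_S _ _ H1). destruct H1 as [_ [dphi [Hd Hn]]].
    exists (fun x => exp (phi x) * dphi x). split.
    + intros x Hx. rewrite Rmult_comm.
      exact (is_derive_comp exp phi x _ _ (is_derive_exp _) (Hd x Hx)).
    + apply (smooth_right_mult n (fun x => exp (phi x)) dphi); auto.
Qed.

Lemma rderive_n_S (j : nat) (g : R -> R) : rderive_n (S j) g = rderive_n j (rderive g).
Proof. induction j as [|j IH]; simpl; auto. simpl in IH. now rewrite IH. Qed.

Lemma rderive_n_smooth_right (n : nat) (phi g : R -> R) :
  smooth_right n phi -> (forall x, 0 < x -> g x = phi x) ->
  filterlim g (at_right 0) (locally (g 0)) ->
  forall j, (j <= n)%nat ->
    filterlim (rderive_n j g) (at_right 0) (locally (rderive_n j g 0)) /\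
    ((j < n)%nat -> forall x, 0 < x -> is_derive (rderive_n j g) x (rderive_n (S j) g x)).
Proof.
  revert phi g. induction n as [|n IH]; intros phi g Hn Hg Hl j Hj.
  - replace j with 0%nat by lia. split; [exact Hl|lia].
  - destruct Hn as [_ [dphi [Hd Hn']]].
    assert (Hgd : forall x, 0 < x -> is_derive g x (dphi x)).
    { intros x Hx. apply is_derive_ext_loc with phi; auto.
      apply (filter_imp (fun y => 0 < y)); [|now apply locally_gt].
      intros y Hy. symmetry. auto. }
    assert (Hg' : forall x, 0 < x -> rderive g x = dphi x).
    { intros x Hx. apply rderive_pos; auto. }
    destruct (smooth_right_lim _ _ Hn') as [l Hlim].
    assert (Hl' : filterlim (rderive g) (at_right 0) (locally (rderive g 0))).
    { rewrite (rderive_0 g dphi l Hl Hgd Hlim). apply (filterlim_ext_loc dphi); auto.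
      exists (mkposreal 1 Rlt_0_1). intros y _ Hy. symmetry. auto. }
    destruct j as [|j].
    + split; auto. intros _ x Hx. simpl. rewrite Hg'; auto.
    + rewrite (rderive_n_S (S j)), (rderive_n_S j).
      destruct (IH dphi (rderive g) Hn' Hg' Hl' j) as [A B]; [lia|].
      split; auto. intros Hjn. apply B. lia.
Qed.

(** * Termwise differentiation of series *)

Lemma is_lim_seq_ratio_pow (j : nat) :
  is_lim_seq (fun n => (INR (S (S n)) / INR (S n)) ^ j) 1.
Proof.
  assert (H0 : is_lim_seq (fun n => / INR (S n)) 0).
  { apply (is_lim_seq_incr_1 (fun n => / INR n)).
    replace (Finite 0) with (Rbar_inv p_infty) by reflexivity.
    apply is_lim_seq_inv; [apply is_lim_seq_INR|discriminate]. }
  assert (H1 : is_lim_seq (fun n => INR (S (S n)) / INR (S n)) 1).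
  { apply is_lim_seq_ext with (fun n => 1 + / INR (S n)).
    - intros n. rewrite (S_INR (S n)). field. apply not_0_INR. discriminate.
    - replace (Finite 1) with (Finite (1 + 0)) by (f_equal; ring).
      apply is_lim_seq_plus'; auto using is_lim_seq_const. }
  induction j as [|j IH]; simpl.
  - apply is_lim_seq_const.
  - replace (Finite 1) with (Finite (1 * 1)) by (f_equal; ring).
    now apply is_lim_seq_mult'.
Qed.

Lemma ex_series_pow_geom (t : R) (j : nat) : 1 < t ->
  ex_series (fun m => / t ^ m * INR m ^ j).
Proof.
  intros Ht. apply ex_series_incr_1, ex_series_Rabs, (ex_series_DAlembert _ (/ t)).
  - rewrite <- Rinv_1. apply Rinv_lt_contravar; lra.
  - intros n. apply Rmult_integral_contrapositive. split.
    + apply Rinv_neq_0_compat, pow_nonzero. lra.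
    + apply pow_nonzero, not_0_INR. discriminate.
  - apply is_lim_seq_ext with (fun n => / t * (INR (S (S n)) / INR (S n)) ^ j).
    + intros n.
      assert (t ^ n <> 0) by (apply pow_nonzero; lra).
      assert (INR (S n) ^ j <> 0) by (apply pow_nonzero, not_0_INR; discriminate).
      rewrite Rabs_right.
      * unfold Rdiv. rewrite Rpow_mult_distr, pow_inv. simpl. field. repeat split; auto; lra.
      * apply Rle_ge, Rmult_le_pos; [apply Rmult_le_pos|left; apply Rinv_0_lt_compat].
        -- left. apply Rinv_0_lt_compat, pow_lt. lra.
        -- apply pow_le, pos_INR.
        -- apply Rmult_lt_0_compat; [apply Rinv_0_lt_compat|]; apply pow_lt; try lra.
           apply lt_0_INR. lia.
    + replace (Finite (/ t)) with (Rbar_mult (/ t) 1) by (simpl; f_equal; ring).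
      apply is_lim_seq_scal_l, is_lim_seq_ratio_pow.
Qed.

Lemma ex_series_Rabs_le (v M : nat -> R) :
  ex_series M -> (forall m, Rabs (v m) <= M m) -> ex_series v.
Proof. intros HM Hv. now apply (ex_series_le v M). Qed.

Lemma Series_tail_le (v M : nat -> R) (n : nat) :
  ex_series M -> (forall m, Rabs (v m) <= M m) ->
  Rabs (Series v - sum_n v n) <= Series M - sum_n M n.
Proof.
  intros HM Hv.
  assert (Hev : ex_series v) by now apply (ex_series_Rabs_le v M).
  assert (HMt : ex_series (fun k => M (S n + k)%nat)) by now apply (ex_series_incr_n M (S n)).
  rewrite (Series_incr_n v (S n)), (Series_incr_n M (S n)), !sum_n_Reals by (lia || auto).
  simpl pred. ring_simplify (sum_f_R0 v n + Series (fun k => v (S n + k)%nat) - sum_f_R0 v n).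
  ring_simplify (sum_f_R0 M n + Series (fun k => M (S n + k)%nat) - sum_f_R0 M n).
  eapply Rle_trans; [apply Series_Rabs|].
  - apply (ex_series_Rabs_le _ (fun k => M (S n + k)%nat)); auto.
    intros m. rewrite Rabs_Rabsolu. auto.
  - apply Series_le; auto. intros m. split; auto using Rabs_pos.
Qed.

Lemma CVU_dom_Mtest (v : nat -> R -> R) (M : nat -> R) (D : R -> Prop) :
  ex_series M -> (forall m x, D x -> Rabs (v m x) <= M m) ->
  CVU_dom (fun n x => sum_n (fun m => v m x) n) D.
Proof.
  intros HM Hv eps.
  destruct (Series_correct M HM (ball (Series M) eps) (locally_ball _ _)) as [N HN].
  exists N. intros n Hn x Dx.
  change (Rabs (sum_n (fun m => v m x) n - Series (fun m => v m x)) < eps).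
  rewrite Rabs_minus_sym.
  eapply Rle_lt_trans; [apply Series_tail_le; [exact HM|intros m; now apply Hv]|].
  assert (Hb : Rabs (sum_n M n - Series M) < eps) by now apply HN.
  apply Rabs_lt_between in Hb. lra.
Qed.

Lemma continuous_sum_n (v : nat -> R -> R) (x : R) (n : nat) :
  (forall m, continuous (v m) x) -> continuous (fun y => sum_n (fun m => v m y) n) x.
Proof.
  intros Hv. induction n as [|n IH].
  - apply (continuous_ext (v 0%nat)); auto. intros y. now rewrite sum_O.
  - apply (continuous_ext (fun y => sum_n (fun m => v m y) n + v (S n) y)).
    + intros y. now rewrite sum_Sn.
    + now apply (continuous_plus (fun y => sum_n (fun m => v m y) n) (v (S n))).
Qed.

Lemma is_derive_Series (u du : nat -> R -> R) (M1 M2 : nat -> R) (a b : R) :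
  ex_series M1 -> ex_series M2 ->
  (forall m x, a < x < b -> Rabs (u m x) <= M1 m) ->
  (forall m x, a < x < b -> Rabs (du m x) <= M2 m) ->
  (forall m x, a < x < b -> is_derive (u m) x (du m x)) ->
  (forall m x, a < x < b -> continuous (du m) x) ->
  forall x, a < x < b ->
    is_derive (fun y => Series (fun m => u m y)) x (Series (fun m => du m x)).
Proof.
  intros H1 H2 B1 B2 Hd Hc x Hx.
  set (D := fun y => a < y < b).
  set (fn := fun n y => sum_n (fun m => u m y) n).
  assert (oD : open D) by (apply open_and; [apply open_gt|apply open_lt]).
  assert (Hfd : forall n y, D y -> is_derive (fn n) y (sum_n (fun m => du m y) n)).
  { intros n y Dy. apply (is_derive_sum_n (fun m y => u m y)). intros k _. now apply Hd. }
  assert (HDf : forall n y, D y -> Derive (fn n) y = sum_n (fun m => du m y) n)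
    by (intros n y Dy; now apply is_derive_unique, Hfd).
  assert (Hcd : forall n y, D y -> continuity_pt (Derive (fn n)) y).
  { intros n y Dy. apply continuity_pt_filterlim.
    apply (continuous_ext_loc _ (fun z => sum_n (fun m => du m z) n)).
    - destruct (oD y Dy) as [e He]. exists e. intros z Hz. symmetry. now apply HDf, He.
    - apply continuous_sum_n. intros m. now apply Hc. }
  assert (Hcvu' : CVU_dom (fun n y => Derive (fn n) y) D).
  { intros eps. destruct (CVU_dom_Mtest du M2 D H2 B2 eps) as [N HN].
    exists N. intros n Hn y Dy. rewrite HDf by auto.
    rewrite (Lim_seq_ext _ (fun k => sum_n (fun m => du m y) k)) by (intros; now apply HDf).
    now apply HN. }
  assert (Hcon : is_connected D) by (intros p q z [Hp _] [_ Hq] Hz; split; lra).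
  assert (C := CVU_Derive fn D oD Hcon (CVU_dom_Mtest u M1 D H1 B1)
                 (fun n y Dy => ex_intro _ _ (Hfd n y Dy)) Hcd Hcvu' x Hx).
  unfold Series at 2. rewrite <- (Lim_seq_ext (fun n => Derive (fn n) x)); auto.
Qed.

Lemma Series_right_continuous (u : nat -> R -> R) (M : nat -> R) (r : R) : 0 < r ->
  ex_series M ->
  (forall m x, 0 <= x < r -> Rabs (u m x) <= M m) ->
  (forall m x, 0 <= x < r -> continuous (u m) x) ->
  filterlim (fun y => Series (fun m => u m y)) (at_right 0)
    (locally (Series (fun m => u m 0))).
Proof.
  intros Hr HM B Hc.
  (* Symmetrize via [Rabs] to apply the two-sided uniform-limit continuity theorem. *)
  set (D := fun y => - r < y < r).
  set (fn := fun n y => sum_n (fun m => u m (Rabs y)) n).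
  assert (HD : forall y, D y -> 0 <= Rabs y < r).
  { intros y Dy. split; [apply Rabs_pos|apply Rabs_def1; apply Dy]. }
  assert (oD : open D) by (apply open_and; [apply open_gt|apply open_lt]).
  assert (C0 : continuity_pt (fun y => Lim_seq (fun n => fn n y)) 0).
  { apply (CVU_cont_open fn D oD); [| |unfold D; lra].
    - apply (CVU_dom_Mtest (fun m y => u m (Rabs y)) M D HM). auto.
    - intros n x Dx. apply continuity_pt_filterlim, continuous_sum_n. intros m.
      apply (continuous_comp Rabs (u m)); auto using continuous_Rabs. }
  apply continuity_pt_filterlim, continuous_at_right in C0.
  unfold fn in C0. rewrite Rabs_R0 in C0.
  apply (filterlim_ext_loc (fun y => Series (fun m => u m (Rabs y)))); auto.
  exists (mkposreal 1 Rlt_0_1). intros y _ Hy. now rewrite Rabs_right by lra.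
Qed.

(** * The logarithm of f_t *)

Definition log_term (t : R) (m : nat) (x : R) : R := / t ^ m * ln (1 + INR m * x).
Definition log_f (t x : R) : R := Series (fun m => log_term t m x).
Definition ratio_term (t : R) (k m : nat) (x : R) : R :=
  / t ^ m * (INR m / (1 + INR m * x)) ^ k.
Definition ratio_series (t : R) (k : nat) (x : R) : R := Series (fun m => ratio_term t k m x).

Lemma ln_1_plus_bounds (y : R) : 0 <= y -> 0 <= ln (1 + y) <= y.
Proof.
  intros Hy. split.
  - rewrite <- ln_1. apply ln_le; lra.
  - destruct (Req_dec y 0) as [->|Hy0].
    + rewrite Rplus_0_r, ln_1. lra.
    + rewrite <- (ln_exp y) at 2. left. apply ln_increasing; [lra|]. now apply exp_ineq1.
Qed.

Lemma one_plus_INR_mult_pos (m : nat) (x : R) : 0 <= x -> 0 < 1 + INR m * x.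
Proof. intros Hx. assert (0 <= INR m * x) by (apply Rmult_le_pos; auto using pos_INR). lra. Qed.

Lemma inv_pow_pos (t : R) (m : nat) : 1 < t -> 0 < / t ^ m.
Proof. intros Ht. apply Rinv_0_lt_compat, pow_lt. lra. Qed.

Lemma log_term_bound (t c x : R) (m : nat) : 1 < t -> 0 <= x <= c ->
  Rabs (log_term t m x) <= c * (/ t ^ m * INR m ^ 1).
Proof.
  intros Ht Hx. unfold log_term.
  assert (Hm := pos_INR m). assert (Hp := inv_pow_pos t m Ht).
  assert (Hmx : 0 <= INR m * x <= INR m * c)
    by (split; apply Rmult_le_compat_l || apply Rmult_le_pos; lra).
  destruct (ln_1_plus_bounds (INR m * x)) as [A B]; [lra|].
  rewrite Rabs_right by (apply Rle_ge, Rmult_le_pos; lra). simpl pow. nra.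
Qed.

Lemma ratio_term_bound (t x : R) (k m : nat) : 1 < t -> 0 <= x ->
  Rabs (ratio_term t k m x) <= / t ^ m * INR m ^ k.
Proof.
  intros Ht Hx. unfold ratio_term.
  assert (Hm := pos_INR m). assert (Hp := inv_pow_pos t m Ht).
  assert (Hd := one_plus_INR_mult_pos m x Hx).
  assert (Hr : 0 <= INR m / (1 + INR m * x) <= INR m).
  { split; [apply Rmult_le_pos; [lra|left; now apply Rinv_0_lt_compat]|].
    apply Rle_div_l; [lra|]. assert (0 <= INR m * (INR m * x)) by (apply Rmult_le_pos; nra). nra. }
  rewrite Rabs_right by (apply Rle_ge, Rmult_le_pos; [lra|apply pow_le; lra]).
  apply Rmult_le_compat_l; [lra|]. now apply pow_incr.
Qed.

Lemma is_derive_log_term (t x : R) (m : nat) : 1 < t -> 0 <= x ->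
  is_derive (log_term t m) x (ratio_term t 1 m x).
Proof.
  intros Ht Hx. assert (Hd := one_plus_INR_mult_pos m x Hx).
  unfold log_term, ratio_term. auto_derive; [lra|]. unfold Rdiv. ring.
Qed.

Lemma is_derive_ratio_term (t x : R) (k m : nat) : 1 < t -> 0 <= x ->
  is_derive (ratio_term t k m) x (- INR k * ratio_term t (S k) m x).
Proof.
  intros Ht Hx. assert (Hd := one_plus_INR_mult_pos m x Hx).
  unfold ratio_term. auto_derive; [lra|].
  destruct k as [|k]; [simpl; ring|]. simpl pred.
  rewrite <- (tech_pow_Rmult _ (S k)), <- (tech_pow_Rmult _ k), Rinv_mult. unfold Rdiv. ring.
Qed.

Lemma continuous_ratio_term (t x : R) (k m : nat) : 1 < t -> 0 <= x ->
  continuous (ratio_term t k m) x.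
Proof.
  intros Ht Hx. apply (ex_derive_continuous (K := R_AbsRing) (ratio_term t k m)).
  eexists. now apply is_derive_ratio_term.
Qed.

Lemma is_derive_ratio_series (t x : R) (k : nat) : 1 < t -> 0 < x ->
  is_derive (ratio_series t k) x (- INR k * ratio_series t (S k) x).
Proof.
  intros Ht Hx. unfold ratio_series. rewrite <- Series_scal_l.
  apply (is_derive_Series (ratio_term t k) (fun m y => - INR k * ratio_term t (S k) m y)
          (fun m => / t ^ m * INR m ^ k) (fun m => INR k * (/ t ^ m * INR m ^ S k)) 0 (x + 1));
    try lra.
  - now apply ex_series_pow_geom.
  - exact (ex_series_scal_l (INR k) _ (ex_series_pow_geom t (S k) Ht)).
  - intros m y Hy. apply ratio_term_bound; lra.
  - intros m y Hy. rewrite Rabs_mult, Rabs_Ropp, Rabs_right by (apply Rle_ge, pos_INR).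
    apply Rmult_le_compat_l; [apply pos_INR|]. apply ratio_term_bound; lra.
  - intros m y Hy. apply is_derive_ratio_term; lra.
  - intros m y Hy. apply (continuous_scal_r (K := R_AbsRing) (- INR k) (ratio_term t (S k) m)).
    apply continuous_ratio_term; lra.
Qed.

Lemma is_derive_log_f (t x : R) : 1 < t -> 0 < x -> is_derive (log_f t) x (ratio_series t 1 x).
Proof.
  intros Ht Hx. unfold log_f, ratio_series.
  apply (is_derive_Series (log_term t) (ratio_term t 1) (fun m => (x + 1) * (/ t ^ m * INR m ^ 1))
          (fun m => / t ^ m * INR m ^ 1) 0 (x + 1)); try lra.
  - exact (ex_series_scal_l (x + 1) _ (ex_series_pow_geom t 1 Ht)).
  - now apply ex_series_pow_geom.
  - intros m y Hy. apply log_term_bound; lra.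
  - intros m y Hy. apply ratio_term_bound; lra.
  - intros m y Hy. apply is_derive_log_term; lra.
  - intros m y Hy. apply continuous_ratio_term; lra.
Qed.

Lemma ratio_series_right_continuous (t : R) (k : nat) : 1 < t ->
  filterlim (ratio_series t k) (at_right 0) (locally (ratio_series t k 0)).
Proof.
  intros Ht. apply (Series_right_continuous _ (fun m => / t ^ m * INR m ^ k) 1 Rlt_0_1).
  - now apply ex_series_pow_geom.
  - intros m x Hx. apply ratio_term_bound; lra.
  - intros m x Hx. apply continuous_ratio_term; lra.
Qed.

Lemma log_f_0 (t : R) : log_f t 0 = 0.
Proof.
  unfold log_f, log_term. rewrite (Series_ext _ (fun m => 0 * / t ^ m)), Series_scal_l.
  - apply Rmult_0_l.
  - intros m. rewrite Rmult_0_r, Rplus_0_r, ln_1. ring.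
Qed.

Lemma log_f_right_continuous (t : R) : 1 < t ->
  filterlim (log_f t) (at_right 0) (locally (log_f t 0)).
Proof.
  intros Ht. apply (Series_right_continuous _ (fun m => 1 * (/ t ^ m * INR m ^ 1)) 1 Rlt_0_1).
  - exact (ex_series_scal_l 1 _ (ex_series_pow_geom t 1 Ht)).
  - intros m x Hx. apply log_term_bound; lra.
  - intros m x Hx. apply (ex_derive_continuous (K := R_AbsRing) (log_term t m)).
    eexists. apply is_derive_log_term; lra.
Qed.

Lemma smooth_right_ratio_series (t : R) (n k : nat) : 1 < t ->
  smooth_right n (ratio_series t k).
Proof.
  intros Ht. revert k. induction n as [|n IH]; intros k.
  all: split; [exists (ratio_series t k 0); now apply ratio_series_right_continuous|].
  - exact I.
  - exists (fun x => - INR k * ratio_series t (S k) x). split.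
    + intros x Hx. now apply is_derive_ratio_series.
    + apply smooth_right_scal, IH.
Qed.

Lemma smooth_right_exp_log_f (t : R) (n : nat) : 1 < t ->
  smooth_right n (fun x => exp (log_f t x)).
Proof.
  intros Ht. apply smooth_right_exp. destruct n as [|n].
  all: split; [exists (log_f t 0); now apply log_f_right_continuous|].
  - exact I.
  - exists (ratio_series t 1). split.
    + intros x Hx. now apply is_derive_log_f.
    + now apply smooth_right_ratio_series.
Qed.

(** * Products as exponentials of series *)

Lemma ln_0 : ln 0 = 0.
Proof. unfold ln. destruct (Rlt_dec 0 0); [exfalso; lra|reflexivity]. Qed.

Lemma prod1_exp (e : nat -> R) (M : nat) :
  e 0%nat = 0 -> prod1 (fun m => exp (e m)) M = exp (sum_n e M).
Proof.
  intros He0. induction M as [|M IH]; simpl.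
  - now rewrite sum_O, He0, exp_0.
  - now rewrite IH, sum_Sn, <- exp_plus.
Qed.

Lemma inf_prod_exp (e : nat -> R) (l : R) :
  e 0%nat = 0 -> is_series e l -> inf_prod (fun m => exp (e m)) = exp l.
Proof.
  intros He0 He. unfold inf_prod.
  rewrite (Lim_seq_ext _ (fun M => exp (sum_n e M))) by (intros M; now apply prod1_exp).
  rewrite (is_lim_seq_unique _ (exp l)); [reflexivity|].
  apply (is_lim_seq_continuous exp (sum_n e) l); [|exact He].
  apply continuity_pt_filterlim, continuous_exp.
Qed.

Lemma f_t_exp (t x : R) : 1 < t -> 0 <= x -> f_t t x = exp (log_f t x).
Proof.
  intros Ht Hx. apply (inf_prod_exp (fun m => log_term t m x)).
  - unfold log_term. simpl. rewrite Rmult_0_l, Rplus_0_r, ln_1. ring.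
  - apply Series_correct, (ex_series_Rabs_le _ (fun m => x * (/ t ^ m * INR m ^ 1))).
    + exact (ex_series_scal_l x _ (ex_series_pow_geom t 1 Ht)).
    + intros m. apply log_term_bound; lra.
Qed.

Definition log_nat_term (t : R) (m : nat) : R := / t ^ m * ln (INR m).

Lemma ex_series_log_nat_term (t : R) : 1 < t -> ex_series (log_nat_term t).
Proof.
  intros Ht. apply (ex_series_Rabs_le _ (fun m => / t ^ m * INR m ^ 1)).
  - now apply ex_series_pow_geom.
  - intros [|m]; unfold log_nat_term.
    + simpl. rewrite ln_0, Rmult_0_r, Rabs_R0. lra.
    + assert (Hp := inv_pow_pos t (S m) Ht).
      destruct (ln_1_plus_bounds (INR m) (pos_INR m)) as [A B].
      rewrite S_INR, Rplus_comm, Rabs_right by (apply Rle_ge, Rmult_le_pos; lra).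
      rewrite pow_1. apply Rmult_le_compat_l; lra.
Qed.

Lemma sigma_t_exp (t : R) : 1 < t -> sigma_t t = exp (Series (log_nat_term t)).
Proof.
  intros Ht. apply (inf_prod_exp (log_nat_term t)).
  - unfold log_nat_term. simpl. now rewrite ln_0, Rmult_0_r.
  - now apply Series_correct, ex_series_log_nat_term.
Qed.

Lemma g_seq_exp (t : R) (n : nat) : t <> 0 ->
  g_seq t n = exp (t ^ n * sum_n (log_nat_term t) n).
Proof.
  intros Ht. induction n as [|n IH]; cbn [g_seq].
  - rewrite sum_O. unfold log_nat_term. simpl. now rewrite ln_0, !Rmult_0_r, exp_0.
  - rewrite IH, sum_Sn. unfold Rpower. rewrite ln_exp.
    replace (t ^ S n * plus (sum_n (log_nat_term t) n) (log_nat_term t (S n)))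
      with (ln (INR (S n)) + t * (t ^ n * sum_n (log_nat_term t) n)).
    + rewrite exp_plus, exp_ln by (apply lt_0_INR; lia). ring.
    + unfold log_nat_term, plus. simpl. field. split; auto. now apply pow_nonzero.
Qed.

(* Shifting the tail of [log_nat_term] by [n] and factoring [ln (n + k) = ln n + ln (1 + k / n)]
   splits it into a geometric series and [log_f t (/ n)]. *)
Lemma scaled_tail_log_nat_term (t : R) (n : nat) : 1 < t -> (1 <= n)%nat ->
  t ^ n * (Series (log_nat_term t) - sum_n (log_nat_term t) n)
  = ln (INR n) / (t - 1) + log_f t (/ INR n).
Proof.
  intros Ht Hn.
  assert (Htn : t ^ n <> 0) by (apply pow_nonzero; lra).
  assert (HnR : 0 < INR n) by (apply lt_0_INR; lia).
  assert (Hq : Rabs (/ t) < 1).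
  { rewrite Rabs_right by (apply Rle_ge; left; apply Rinv_0_lt_compat; lra).
    rewrite <- Rinv_1. apply Rinv_lt_contravar; lra. }
  assert (Hgeom : is_series (fun k => ln (INR n) * (/ t) ^ k) (ln (INR n) / (t - 1) * t)).
  { replace (ln (INR n) / (t - 1) * t) with (ln (INR n) * / (1 - / t)) by (field; lra).
    exact (is_series_scal_l _ _ _ (is_series_geom _ Hq)). }
  assert (Hlog : is_series (fun k => log_term t k (/ INR n)) (log_f t (/ INR n))).
  { apply Series_correct, (ex_series_Rabs_le _ (fun m => / INR n * (/ t ^ m * INR m ^ 1))).
    + exact (ex_series_scal_l _ _ (ex_series_pow_geom t 1 Ht)).
    + intros m. apply log_term_bound; auto. split; [left; apply Rinv_0_lt_compat|]; lra. }
  assert (Htail : Series (fun k => t ^ n * log_nat_term t (n + k))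
                  = ln (INR n) / (t - 1) * t + log_f t (/ INR n)).
  { apply is_series_unique.
    apply (is_series_ext (fun k => plus (ln (INR n) * (/ t) ^ k) (log_term t k (/ INR n)))).
    - intros k. unfold plus, log_nat_term, log_term. simpl.
      assert (Hk : 0 < 1 + INR k * / INR n)
        by (apply one_plus_INR_mult_pos; left; now apply Rinv_0_lt_compat).
      replace (INR (n + k)) with (INR n * (1 + INR k * / INR n)) by (rewrite plus_INR; field; lra).
      rewrite ln_mult, pow_add, pow_inv by lra. field. split; [now apply pow_nonzero; lra|auto].
    - exact (is_series_plus _ _ _ _ Hgeom Hlog). }
  rewrite Series_scal_l in Htail.
  rewrite (Series_incr_n (log_nat_term t) n), <- sum_n_Reals
    by (lia || now apply ex_series_log_nat_term).
  assert (Hlast : t ^ n * log_nat_term t n = ln (INR n)) by (unfold log_nat_term; field; auto).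
  destruct n as [|n]; [lia|]. rewrite sum_Sn. cbn [pred].
  change (plus ?a ?b) with (a + b).
  replace (t ^ S n * (sum_n (log_nat_term t) n + Series (fun k => log_nat_term t (S n + k))
                      - (sum_n (log_nat_term t) n + log_nat_term t (S n))))
    with (t ^ S n * Series (fun k => log_nat_term t (S n + k)) - t ^ S n * log_nat_term t (S n))
    by ring.
  rewrite Htail, Hlast. field. lra.
Qed.

Lemma g_seq_f_t (t : R) (n : nat) : 1 < t -> (1 <= n)%nat ->
  g_seq t n = Rpower (sigma_t t) (t ^ n) * Rpower (INR n) (- (1 / (t - 1)))
              * / f_t t (/ INR n).
Proof.
  intros Ht Hn.
  assert (HnR : 0 < INR n) by (apply lt_0_INR; lia).
  assert (Htail := scaled_tail_log_nat_term t n Ht Hn).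
  rewrite g_seq_exp, sigma_t_exp, f_t_exp by (lra || (left; now apply Rinv_0_lt_compat)).
  unfold Rpower. rewrite ln_exp, <- exp_Ropp, <- !exp_plus. f_equal.
  unfold Rdiv in Htail |- *. lra.
Qed.

(** * Taylor expansion of f_t at 1/n *)

Lemma sum_f_R0_first_sum_f (a : nat -> R) (M : nat) : (1 <= M)%nat ->
  sum_f_R0 a M = a 0%nat + sum_f 1 M a.
Proof.
  intros HM. rewrite decomp_sum by lia. unfold sum_f. f_equal.
  replace (M - 1)%nat with (pred M) by lia.
  apply sum_eq. intros i _. now rewrite Nat.add_1_r.
Qed.

Lemma is_lim_seq_le_inv_INR (u : nat -> R) :
  eventually (fun n => 0 < u n <= / INR n) -> is_lim_seq u 0.
Proof.
  intros Hu. apply (is_lim_seq_le_le_loc (fun _ => 0) u (fun n => / INR n)).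
  - apply (filter_imp _ _ (fun n H => conj (Rlt_le _ _ (proj1 H)) (proj2 H)) Hu).
  - apply is_lim_seq_const.
  - replace (Finite 0) with (Rbar_inv p_infty) by reflexivity.
    apply is_lim_seq_inv; [apply is_lim_seq_INR|discriminate].
Qed.

Lemma is_lim_seq_at_right (u : nat -> R) :
  is_lim_seq u 0 -> eventually (fun n => 0 < u n) -> filterlim u eventually (at_right 0).
Proof.
  intros Hu Hpos P [e HP]. change (eventually (fun n => P (u n))).
  apply (filter_imp (fun n => ball 0 e (u n) /\ 0 < u n)).
  - intros n [Hb Hp]. now apply HP.
  - apply filter_and; [apply Hu, locally_ball|exact Hpos].
Qed.

Lemma rderive_n_f_t (t : R) (N : nat) : 1 < t ->
  forall j, (j <= N)%nat ->
    filterlim (rderive_n j (f_t t)) (at_right 0) (locally (rderive_n j (f_t t) 0)) /\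
    ((j < N)%nat -> forall x, 0 < x ->
       is_derive (rderive_n j (f_t t)) x (rderive_n (S j) (f_t t) x)).
Proof.
  intros Ht. apply (rderive_n_smooth_right N (fun x => exp (log_f t x))).
  - now apply smooth_right_exp_log_f.
  - intros x Hx. apply f_t_exp; lra.
  - rewrite f_t_exp by lra.
    apply (filterlim_ext_loc (fun x => exp (log_f t x))).
    + exists (mkposreal 1 Rlt_0_1). intros y _ Hy. symmetry. apply f_t_exp; lra.
    + exact (filterlim_comp _ _ _ _ exp _ _ _ (log_f_right_continuous t Ht) (continuous_exp _)).
Qed.

Lemma f_t_0 (t : R) : 1 < t -> f_t t 0 = 1.
Proof. intros Ht. now rewrite f_t_exp, log_f_0, exp_0 by lra. Qed.

Lemma Taylor_Lagrange_f_t (t : R) (N n : nat) : 1 < t -> (2 <= N)%nat -> (1 <= n)%nat ->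
  exists xi, 0 < xi < / INR n /\
    f_t t (/ INR n) =
      1 + sum_f 1 (N - 1) (fun k => / (INR n ^ k * INR (fact k)) * rderive_n k (f_t t) 0)
      + / (INR n ^ N * INR (fact N)) * rderive_n N (f_t t) xi.
Proof.
  intros Ht HN Hn.
  assert (HnR : 0 < INR n) by (apply lt_0_INR; lia).
  assert (Hf := rderive_n_f_t t N Ht).
  destruct N as [|M]; [lia|]. replace (S M - 1)%nat with M by lia.
  destruct (Taylor_Lagrange_right (fun k => rderive_n k (f_t t)) M 0 (/ INR n))
    as [xi [Hxi HT]].
  - now apply Rinv_0_lt_compat.
  - intros k x Hk Hx. apply Hf; [lia|lia|lra].
  - intros k Hk. apply Hf. lia.
  - exists xi. split; auto.
    change (f_t t (/ INR n)) with (rderive_n 0 (f_t t) (/ INR n)).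
    rewrite HT, sum_f_R0_first_sum_f, Rminus_0_r by lia.
    change (rderive_n 0 (f_t t) 0) with (f_t t 0). rewrite f_t_0 by lra.
    assert (Hnk : forall k, INR n ^ k <> 0) by (intros k; apply pow_nonzero; lra).
    f_equal; [f_equal|].
    + simpl. field.
    + unfold sum_f. apply sum_eq. intros i _. rewrite pow_inv. field. auto using INR_fact_neq_0.
    + rewrite pow_inv. field. auto using INR_fact_neq_0.
Qed.

Theorem lemma21 (t : R) (N : nat) :
  1 < t -> (2 <= N)%nat ->
  exists mu : nat -> R,
    (forall n : nat, (1 <= n)%nat ->
       0 < mu n /\
       g_seq t n =
         Rpower (sigma_t t) (t ^ n) * Rpower (INR n) (- (1 / (t - 1))) *
         / (1 + sum_f 1 (N - 1)
                  (fun k => / (INR n ^ k * INR (fact k)) * rderive_n k (f_t t) 0)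
              + / (INR n ^ N * INR (fact N)) * rderive_n N (f_t t) (mu n)))
    /\ is_lim_seq mu 0
    /\ is_lim_seq (fun n => rderive_n N (f_t t) (mu n)) (rderive_n N (f_t t) 0).
Proof.
  intros Ht HN.
  assert (Hxi : forall n : nat, exists xi, (1 <= n)%nat ->
    0 < xi < / INR n /\
    f_t t (/ INR n) =
      1 + sum_f 1 (N - 1) (fun k => / (INR n ^ k * INR (fact k)) * rderive_n k (f_t t) 0)
      + / (INR n ^ N * INR (fact N)) * rderive_n N (f_t t) xi).
  { intros n. destruct (Compare_dec.le_lt_dec 1 n) as [Hn|Hn].
    - destruct (Taylor_Lagrange_f_t t N n Ht HN Hn) as [xi Hxi]. now exists xi.
    - exists 0. lia. }
  destruct (functional_choice _ Hxi) as [mu Hmu].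
  assert (Hpos : eventually (fun n => 0 < mu n <= / INR n)).
  { exists 1%nat. intros n Hn. destruct (Hmu n Hn) as [Hb _]. lra. }
  assert (Hlim := is_lim_seq_le_inv_INR mu Hpos).
  exists mu. split; [|split; [exact Hlim|]].
  - intros n Hn. destruct (Hmu n Hn) as [Hb Hf]. split; [lra|].
    now rewrite g_seq_f_t, Hf.
  - apply (filterlim_comp _ _ _ mu (rderive_n N (f_t t)) eventually (at_right 0)).
    + exact (is_lim_seq_at_right mu Hlim (filter_imp _ _ (fun n H => proj1 H) Hpos)).
    + apply (rderive_n_f_t t N Ht N (le_n N)).
Qed.
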